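(* In an MFQST with degree bound $\phi=3$, every source has degree at most $2$. Moreover, if a source has degree $2$, then it is collinear with its two neighbours.
   Context: Let $Z=\{z_1,\dots,z_n\}\subset\mathbb{R}^2$ ($n\ge 1$) be a set of sources and $z_{BS}\in\mathbb{R}^2\setminus Z$ a sink; each source has supply $1$. A flow-dependent quadratic Steiner tree (FQST) consists of a finite set $S\subset\mathbb{R}^2$ of Steiner points and a tree $T$ with vertex set $Z\cup S\cup\{z_{BS}\}$ whose edges are directed towards $z_{BS}$. Every node other than the sink has exactly one out-edge, and the sink has none. Each edge $e$ carries a positive flow $f(e)$ such that: - at each source, the flow on its out-edge minus the total flow on its in-edges equals $1$; - at each Steiner point, the out-flow equals the total in-flow; - the sink receives total flow $n$. The cost is $L(T)=\sum_{e\in E(T)} f(e)|e|^2$. An MFQST with degree bound $\phi$ is an FQST minimising $L$ among all FQSTs (any finite $S$, any topology) in which every Steiner point has degree at least $\phi$. *)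

From Stdlib Require Import Reals Lra Lia Arith.
Open Scope R_scope.

Definition point := (R * R)%type.

Definition dist2 (p q : point) : R :=
  (fst p - fst q) ^ 2 + (snd p - snd q) ^ 2.

Definition pt_collinear (p q r : point) : Prop :=
  (fst q - fst p) * (snd r - snd p) - (snd q - snd p) * (fst r - fst p) = 0.

Fixpoint sumR (N : nat) (g : nat -> R) : R :=
  match N with
  | O => 0
  | S k => sumR k g + g k
  end.

Fixpoint cntN (N : nat) (p : nat -> bool) : nat :=
  match N with
  | O => O
  | S k => (cntN k p + (if p k then 1 else 0))%nat
  end.

(* Node numbering: nodes 0..n-1 are the sources (node k at z k),
   nodes n..n+m-1 are the Steiner points (node n+i at spt i),
   node n+m is the sink.  Every non-sink node k < n+m has the unique
   out-edge (k, par k), carrying flow [flow k]. *)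
Record FQST := mkFQST {
  nst : nat;
  spt : nat -> point;
  par : nat -> nat;
  flow : nat -> R
}.

Section FQSTDefs.
Variables (n : nat) (z : nat -> point) (zBS : point).

Definition sink (T : FQST) : nat := (n + nst T)%nat.

Definition node_pos (T : FQST) (k : nat) : point :=
  if Nat.ltb k n then z k
  else if Nat.ltb k (n + nst T) then spt T (k - n) else zBS.

Definition inflow (T : FQST) (k : nat) : R :=
  sumR (n + nst T) (fun j => if Nat.eqb (par T j) k then flow T j else 0).

Definition deg (T : FQST) (k : nat) : nat :=
  ((if Nat.ltb k (n + nst T) then 1 else 0) +
   cntN (n + nst T) (fun j => Nat.eqb (par T j) k))%nat.

Definition adjacent (T : FQST) (k a : nat) : Prop :=
  ((k < n + nst T)%nat /\ a = par T k) \/ ((a < n + nst T)%nat /\ par T a = k).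

Definition is_FQST (T : FQST) : Prop :=
  (forall k, (k < n + nst T)%nat -> (par T k <= n + nst T)%nat /\ par T k <> k) /\
  (* tree directed towards the sink: every node reaches the sink *)
  (forall k, (k < n + nst T)%nat -> exists t, Nat.iter t (par T) k = sink T) /\
  (* vertex set Z ∪ S ∪ {zBS}: Steiner points are new, distinct points *)
  (forall i j, (i < nst T)%nat -> (j < nst T)%nat -> i <> j -> spt T i <> spt T j) /\
  (forall i k, (i < nst T)%nat -> (k < n)%nat -> spt T i <> z k) /\
  (forall i, (i < nst T)%nat -> spt T i <> zBS) /\
  (forall k, (k < n + nst T)%nat -> 0 < flow T k) /\
  (* conservation at sources (supply 1) *)
  (forall k, (k < n)%nat -> flow T k - inflow T k = 1) /\
  (forall k, (n <= k < n + nst T)%nat -> flow T k = inflow T k) /\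
  inflow T (sink T) = INR n.

Definition cost (T : FQST) : R :=
  sumR (n + nst T) (fun k => flow T k * dist2 (node_pos T k) (node_pos T (par T k))).

Definition steiner_deg_ok (phi : nat) (T : FQST) : Prop :=
  forall k, (n <= k < n + nst T)%nat -> (phi <= deg T k)%nat.

Definition is_MFQST (phi : nat) (T : FQST) : Prop :=
  is_FQST T /\ steiner_deg_ok phi T /\
  forall T', is_FQST T' -> steiner_deg_ok phi T' -> cost T <= cost T'.

End FQSTDefs.

(* Let k be a source at position K with parent position P, and let C be a
   nonempty set of children of k.  Splitting off a new Steiner point s -- the
   children in C and k itself now send their flow to s, which forwards the
   flow f_k of k to the old parent -- yields again an FQST in which s has
   degree |C| + 2 >= 3.  Along the ray s = K - t G the cost changes by exactly
   2 t |G|^2 (t f_k - 1), where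
       G = sum_{i in C} f_i (K - z_i) + f_k (K - P),
   and small t > 0 keep s away from the finitely many existing vertices.  So
   minimality forces the stationarity condition G = 0 (Lemma
   [source_stationary]).  For C = {b} it balances the child b against the
   parent, so k, b and the parent are collinear; for C = {a, b} it gives in
   addition f_b (K - z_b) = 0, i.e. b would sit at the position of k, which is
   impossible.  Hence a source has at most one child, and its degree, which is
   1 + (number of children), is at most 2. *)

From Stdlib Require Import Reals Lra Lia Arith List.
Open Scope R_scope.

Lemma sumR_ext N f g : (forall i, (i < N)%nat -> f i = g i) -> sumR N f = sumR N g.
Proof.
  induction N as [|N IH]; intros H; simpl; auto.
  rewrite IH by (intros; apply H; lia). rewrite (H N) by lia. auto.
Qed.

Lemma sumR_plus N f g : sumR N (fun i => f i + g i) = sumR N f + sumR N g.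
Proof. induction N as [|N IH]; simpl; [lra|]. rewrite IH. lra. Qed.

Lemma sumR_minus N f g : sumR N (fun i => f i - g i) = sumR N f - sumR N g.
Proof. induction N as [|N IH]; simpl; [lra|]. rewrite IH. lra. Qed.

Lemma sumR_scal N c f : sumR N (fun i => c * f i) = c * sumR N f.
Proof. induction N as [|N IH]; simpl; [lra|]. rewrite IH. lra. Qed.

Lemma sumR_zero N f : (forall i, (i < N)%nat -> f i = 0) -> sumR N f = 0.
Proof.
  induction N as [|N IH]; intros H; simpl; auto.
  rewrite IH by (intros; apply H; lia). rewrite (H N) by lia. lra.
Qed.

Lemma sumR_le N f g : (forall i, (i < N)%nat -> f i <= g i) -> sumR N f <= sumR N g.
Proof.
  induction N as [|N IH]; intros H; simpl; [lra|].
  assert (sumR N f <= sumR N g) by (apply IH; intros; apply H; lia).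
  assert (f N <= g N) by (apply H; lia). lra.
Qed.

Lemma sumR_delta N a g : (a < N)%nat ->
  sumR N (fun i => if Nat.eqb i a then g i else 0) = g a.
Proof.
  induction N as [|N IH]; intros Ha; [lia|]. simpl.
  destruct (Nat.eqb_spec N a) as [->|Hne].
  - rewrite sumR_zero; [lra|]. intros i Hi. destruct (Nat.eqb_spec i a); [lia|auto].
  - rewrite IH by lia. lra.
Qed.

Lemma sumR_delta2 N a b g : (a < N)%nat -> (b < N)%nat -> a <> b ->
  sumR N (fun i => if orb (Nat.eqb i a) (Nat.eqb i b) then g i else 0) = g a + g b.
Proof.
  intros Ha Hb Hab.
  rewrite (sumR_ext N _ (fun i => (if Nat.eqb i a then g i else 0)
                                 + (if Nat.eqb i b then g i else 0))).
  - rewrite sumR_plus, !sumR_delta; auto.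
  - intros i _. destruct (Nat.eqb_spec i a), (Nat.eqb_spec i b); simpl; subst; try lia; lra.
Qed.

Lemma sumR_ge_term N f c : (forall i, (i < N)%nat -> 0 <= f i) -> (c < N)%nat ->
  f c <= sumR N f.
Proof.
  intros H Hc. rewrite <- (sumR_delta N c f Hc). apply sumR_le. intros i Hi.
  destruct (Nat.eqb_spec i c); [lra | apply H; auto].
Qed.

Lemma cntN_sumR N p : INR (cntN N p) = sumR N (fun i => if p i then 1 else 0).
Proof.
  induction N as [|N IH]; simpl; auto.
  rewrite plus_INR, IH. destruct (p N); simpl; lra.
Qed.

Lemma cntN_witness N p : (1 <= cntN N p)%nat -> exists a, (a < N)%nat /\ p a = true.
Proof.
  induction N as [|N IH]; simpl; intros H; [lia|].
  destruct (p N) eqn:E.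
  - exists N; split; auto.
  - destruct IH as [a [Ha Hp]]; [lia|]. exists a; split; auto.
Qed.

Lemma cntN_two_witnesses N p : (2 <= cntN N p)%nat ->
  exists a b, (a < N)%nat /\ (b < N)%nat /\ a <> b /\ p a = true /\ p b = true.
Proof.
  induction N as [|N IH]; simpl; intros H; [lia|].
  destruct (p N) eqn:E.
  - destruct (cntN_witness N p) as [a [Ha Hp]]; [lia|].
    exists a, N; repeat split; auto; lia.
  - destruct IH as [a [b [? [? [? [? ?]]]]]]; [lia|]. exists a, b; repeat split; auto.
Qed.

Lemma ray_avoids_finite (K : point) (gx gy : R) (L : list point) :
  ~ (gx = 0 /\ gy = 0) ->
  forall eps, 0 < eps -> exists t, 0 < t < eps /\
    forall q, In q L -> (fst K - t * gx, snd K - t * gy) <> q.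
Proof.
  intros HG. induction L as [|q L IH]; intros eps He.
  - exists (eps / 2). split; [lra | intros q []].
  - destruct (IH eps He) as [t1 [Ht1 H1]].
    destruct (Req_dec (fst K - t1 * gx) (fst q)) as [Ex|Nx];
      [destruct (Req_dec (snd K - t1 * gy) (snd q)) as [Ey|Ny]|].
    + (* t1 hits q: take a smaller t2, which can hit q only if G = 0 *)
      destruct (IH t1 (proj1 Ht1)) as [t2 [Ht2 H2]].
      exists t2. split; [lra|]. intros q' [<-|Hq']; [|apply H2; auto].
      intros E. apply HG.
      assert (E1 := f_equal fst E). assert (E2 := f_equal snd E). simpl in E1, E2.
      assert (Hx : (t1 - t2) * gx = 0) by lra. assert (Hy : (t1 - t2) * gy = 0) by lra.
      destruct (Rmult_integral _ _ Hx), (Rmult_integral _ _ Hy); split; lra.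
    + exists t1. split; [lra|]. intros q' [<-|Hq']; [|apply H1; auto].
      intros E. apply Ny. rewrite <- E. reflexivity.
    + exists t1. split; [lra|]. intros q' [<-|Hq']; [|apply H1; auto].
      intros E. apply Nx. rewrite <- E. reflexivity.
Qed.

Lemma balance_collinear (K B P : point) fb F : 0 < fb ->
  fb * (fst K - fst B) + F * (fst K - fst P) = 0 ->
  fb * (snd K - snd B) + F * (snd K - snd P) = 0 ->
  pt_collinear K P B.
Proof.
  intros Hfb E1 E2. unfold pt_collinear.
  assert (H : fb * ((fst P - fst K) * (snd B - snd K) - (snd P - snd K) * (fst B - fst K)) = 0).
  { transitivity ((fst P - fst K) * (fb * (snd B - snd K))
                  - (snd P - snd K) * (fb * (fst B - fst K))); [ring|].
    replace (fb * (snd B - snd K)) with (F * (snd K - snd P)) by lra.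
    replace (fb * (fst B - fst K)) with (F * (fst K - fst P)) by lra. ring. }
  destruct (Rmult_integral _ _ H); lra.
Qed.

Lemma pt_collinear_swap p q r : pt_collinear p q r -> pt_collinear p r q.
Proof. unfold pt_collinear. lra. Qed.

Section FQSTFacts.
Variables (n : nat) (z : nat -> point) (zBS : point) (T : FQST).
Hypothesis HT : is_FQST n z zBS T.
Local Notation N := (n + nst T)%nat.

Lemma fqst_parent i : (i < N)%nat -> (par T i <= N)%nat /\ par T i <> i.
Proof. destruct HT as [H _]. auto. Qed.

Lemma fqst_reach i : (i < N)%nat -> exists t, Nat.iter t (par T) i = N.
Proof. destruct HT as [_ [H _]]. apply H. Qed.

Lemma fqst_flow_pos i : (i < N)%nat -> 0 < flow T i.
Proof. destruct HT as [_ [_ [_ [_ [_ [H _]]]]]]. auto. Qed.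

Lemma fqst_source_balance i : (i < n)%nat -> flow T i - inflow n T i = 1.
Proof. destruct HT as [_ [_ [_ [_ [_ [_ [H _]]]]]]]. auto. Qed.

Lemma fqst_steiner_balance i : (n <= i < N)%nat -> flow T i = inflow n T i.
Proof. destruct HT as [_ [_ [_ [_ [_ [_ [_ [H _]]]]]]]]. auto. Qed.

Lemma fqst_sink_inflow : inflow n T N = INR n.
Proof. destruct HT as [_ [_ [_ [_ [_ [_ [_ [_ H]]]]]]]]. auto. Qed.

Lemma node_pos_source k : (k < n)%nat -> node_pos n z zBS T k = z k.
Proof. intros. unfold node_pos. destruct (Nat.ltb_spec k n); [auto | lia]. Qed.

Lemma node_pos_not_source k j
  (Hz : forall i j, (i < n)%nat -> (j < n)%nat -> i <> j -> z i <> z j)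
  (HBS : forall i, (i < n)%nat -> z i <> zBS) :
  (k < n)%nat -> (j <= N)%nat -> j <> k -> node_pos n z zBS T j <> z k.
Proof.
  intros Hk Hj Hjk. destruct HT as [_ [_ [_ [H4 [H5 _]]]]].
  unfold node_pos. destruct (Nat.ltb_spec j n).
  - apply Hz; auto.
  - destruct (Nat.ltb_spec j N).
    + apply H4; lia.
    + intros E. apply (HBS k Hk). auto.
Qed.

End FQSTFacts.

(* The new tree has the Steiner point s as node N
   (the old sink number) and its sink at N + 1; old nodes keep their numbers,
   except that the old sink is relabelled by [lift_sink]. *)

Section Split.
Variables (n : nat) (z : nat -> point) (zBS : point) (T : FQST).
Hypothesis HT : is_FQST n z zBS T.
Variable k : nat.
Hypothesis Hk : (k < n)%nat.
Variable inC : nat -> bool.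
Hypothesis HC : forall i, inC i = true -> (i < n + nst T)%nat /\ par T i = k.

Local Notation N := (n + nst T)%nat.
Local Notation pos := (node_pos n z zBS T).

Definition lift_sink (y : nat) : nat := if Nat.eqb y N then S N else y.

Definition moved_flow : R := sumR N (fun i => if inC i then flow T i else 0).

Definition split_tree (s : point) : FQST := mkFQST (S (nst T))
  (fun i => if Nat.ltb i (nst T) then spt T i else s)
  (fun i => if Nat.ltb i N then (if orb (inC i) (Nat.eqb i k) then N else lift_sink (par T i))
            else lift_sink (par T k))
  (fun i => if Nat.ltb i N then (if Nat.eqb i k then flow T k - moved_flow else flow T i)
            else flow T k).

Lemma split_size s : (n + nst (split_tree s) = S N)%nat.
Proof. simpl. lia. Qed.

Lemma source_lt_N : (k < N)%nat.
Proof. lia. Qed.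

Lemma source_not_moved : inC k = false.
Proof.
  destruct (inC k) eqn:E; auto.
  destruct (HC k E). destruct (fqst_parent _ _ _ _ HT k source_lt_N). congruence.
Qed.

Lemma split_par_old s i : (i < N)%nat ->
  par (split_tree s) i = if orb (inC i) (Nat.eqb i k) then N else lift_sink (par T i).
Proof. intros H. simpl. destruct (Nat.ltb_spec i N); [auto | lia]. Qed.

Lemma split_par_new s : par (split_tree s) N = lift_sink (par T k).
Proof. simpl. destruct (Nat.ltb_spec N N); [lia | auto]. Qed.

Lemma split_flow_old s i : (i < N)%nat ->
  flow (split_tree s) i = if Nat.eqb i k then flow T k - moved_flow else flow T i.
Proof. intros H. simpl. destruct (Nat.ltb_spec i N); [auto | lia]. Qed.

Lemma split_flow_new s : flow (split_tree s) N = flow T k.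
Proof. simpl. destruct (Nat.ltb_spec N N); [lia | auto]. Qed.

Lemma lift_sink_neq_N y : (y <= N)%nat -> lift_sink y <> N.
Proof. unfold lift_sink. destruct (Nat.eqb_spec y N); lia. Qed.

Lemma lift_sink_lt y : (y < N)%nat -> lift_sink y = y.
Proof. unfold lift_sink. destruct (Nat.eqb_spec y N); lia. Qed.

Lemma lift_sink_eqb x y : (x <= N)%nat -> (y <= N)%nat ->
  Nat.eqb (lift_sink x) (lift_sink y) = Nat.eqb x y.
Proof.
  intros Hx Hy. destruct (Nat.eqb_spec x y) as [<-|Hne]; [apply Nat.eqb_refl|].
  apply Nat.eqb_neq. unfold lift_sink.
  destruct (Nat.eqb_spec x N), (Nat.eqb_spec y N); lia.
Qed.

Lemma N_neqb_lift y : (y <= N)%nat -> Nat.eqb N (lift_sink y) = false.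
Proof. intros Hy. apply Nat.eqb_neq. intros E. apply (lift_sink_neq_N y Hy). auto. Qed.

(* Weighted in-sums of the old edges at an old node y: the moved children
   (if y = k) and the edge of k (if y is the parent of k) are lost. *)
Lemma split_in_sum_old s (w : nat -> R) y : (y <= N)%nat ->
  sumR N (fun i => if Nat.eqb (par (split_tree s) i) (lift_sink y) then w i else 0)
  = sumR N (fun i => if Nat.eqb (par T i) y then w i else 0)
    - (if Nat.eqb y k then sumR N (fun i => if inC i then w i else 0) else 0)
    - (if Nat.eqb (par T k) y then w k else 0).
Proof.
  intros Hy.
  assert (E1 : (if Nat.eqb y k then sumR N (fun i => if inC i then w i else 0) else 0)
    = sumR N (fun i => if andb (inC i) (Nat.eqb y k) then w i else 0)).
  { destruct (Nat.eqb y k).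
    - apply sumR_ext. intros. destruct (inC i); auto.
    - symmetry. apply sumR_zero. intros. destruct (inC i); auto. }
  assert (E2 : (if Nat.eqb (par T k) y then w k else 0)
    = sumR N (fun i => if Nat.eqb i k then (if Nat.eqb (par T k) y then w k else 0) else 0)).
  { rewrite sumR_delta; auto. apply source_lt_N. }
  rewrite E1, E2, <- !sumR_minus. apply sumR_ext. intros i Hi.
  rewrite split_par_old by auto.
  destruct (fqst_parent _ _ _ _ HT i Hi) as [Hp1 Hp2].
  destruct (inC i) eqn:Ei; simpl.
  - destruct (HC i Ei) as [_ Hpi]. rewrite N_neqb_lift by auto.
    destruct (Nat.eqb_spec i k); [subst; congruence|].
    rewrite Hpi. destruct (Nat.eqb_spec k y), (Nat.eqb_spec y k); try lia; lra.
  - destruct (Nat.eqb_spec i k) as [->|Hne].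
    + rewrite N_neqb_lift by auto. destruct (Nat.eqb (par T k) y); lra.
    + rewrite lift_sink_eqb by auto. lra.
Qed.

Lemma split_in_sum_new s (w : nat -> R) :
  sumR N (fun i => if Nat.eqb (par (split_tree s) i) N then w i else 0)
  = sumR N (fun i => if inC i then w i else 0) + w k.
Proof.
  rewrite <- (sumR_delta N k w source_lt_N), <- sumR_plus. apply sumR_ext. intros i Hi.
  rewrite split_par_old by auto. destruct (fqst_parent _ _ _ _ HT i Hi) as [Hp1 Hp2].
  destruct (inC i) eqn:Ei; simpl.
  - destruct (HC i Ei) as [_ Hpi]. rewrite Nat.eqb_refl.
    destruct (Nat.eqb_spec i k); [subst; congruence | lra].
  - destruct (Nat.eqb_spec i k).
    + rewrite Nat.eqb_refl. lra.
    + rewrite (Nat.eqb_sym (lift_sink _) N), N_neqb_lift by auto. lra.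
Qed.

Lemma split_inflow_old s y : (y <= N)%nat ->
  inflow n (split_tree s) (lift_sink y) = inflow n T y - (if Nat.eqb y k then moved_flow else 0).
Proof.
  intros Hy. unfold inflow. rewrite split_size. cbn [sumR].
  rewrite (sumR_ext N _ (fun i => if Nat.eqb (par (split_tree s) i) (lift_sink y)
                                  then flow T i else 0)).
  - rewrite split_in_sum_old, split_par_new, split_flow_new by auto.
    destruct (fqst_parent _ _ _ _ HT k source_lt_N) as [Hk1 Hk2].
    rewrite lift_sink_eqb by auto. unfold moved_flow. destruct (Nat.eqb (par T k) y); lra.
  - intros i Hi. rewrite split_flow_old by auto. destruct (Nat.eqb_spec i k) as [->|]; auto.
    rewrite split_par_old, Nat.eqb_refl, Bool.orb_true_r, N_neqb_lift by auto. auto.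
Qed.

Lemma split_inflow_new s : inflow n (split_tree s) N = flow T k.
Proof.
  unfold inflow. rewrite split_size. cbn [sumR]. rewrite split_in_sum_new, split_par_new.
  destruct (fqst_parent _ _ _ _ HT k source_lt_N) as [Hk1 Hk2].
  rewrite (Nat.eqb_sym (lift_sink _) N), N_neqb_lift by auto.
  rewrite split_flow_old, Nat.eqb_refl by apply source_lt_N.
  rewrite (sumR_ext N _ (fun i => if inC i then flow T i else 0)).
  - unfold moved_flow. lra.
  - intros i Hi. rewrite split_flow_old by auto. destruct (inC i) eqn:Ei; auto.
    destruct (Nat.eqb_spec i k) as [->|]; auto. rewrite source_not_moved in Ei. discriminate.
Qed.

Lemma split_pos_old s i : (i < N)%nat -> node_pos n z zBS (split_tree s) i = pos i.
Proof.
  intros H. unfold node_pos. rewrite split_size. destruct (Nat.ltb_spec i n); auto.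
  destruct (Nat.ltb_spec i (S N)), (Nat.ltb_spec i N); try lia. simpl.
  destruct (Nat.ltb_spec (i - n) (nst T)); auto; lia.
Qed.

Lemma split_pos_new s : node_pos n z zBS (split_tree s) N = s.
Proof.
  unfold node_pos. rewrite split_size. destruct (Nat.ltb_spec N n); [lia|].
  destruct (Nat.ltb_spec N (S N)); [|lia]. simpl.
  destruct (Nat.ltb_spec (N - n) (nst T)); auto; lia.
Qed.

Lemma split_pos_lifted s y : (y <= N)%nat ->
  node_pos n z zBS (split_tree s) (lift_sink y) = pos y.
Proof.
  intros Hy. unfold lift_sink. destruct (Nat.eqb_spec y N) as [->|].
  - unfold node_pos. rewrite split_size.
    destruct (Nat.ltb_spec (S N) n); [lia|]. destruct (Nat.ltb_spec (S N) (S N)); [lia|].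
    destruct (Nat.ltb_spec N n); [lia|]. destruct (Nat.ltb_spec N N); [lia | auto].
  - apply split_pos_old. lia.
Qed.

(* The moved flow never exceeds the inflow of k, so the edge of k keeps a
   flow of at least 1. *)
Lemma moved_flow_le_inflow : moved_flow <= inflow n T k.
Proof.
  unfold moved_flow, inflow. apply sumR_le. intros i Hi.
  destruct (inC i) eqn:Ei.
  - destruct (HC i Ei) as [_ ->]. rewrite Nat.eqb_refl. lra.
  - destruct (Nat.eqb (par T i) k); [|lra]. left. apply (fqst_flow_pos _ _ _ _ HT); auto.
Qed.

(* The new Steiner point has degree |C| + 2 >= 3; old Steiner points keep
   their degree. *)
Lemma split_deg_ok phi s (Hphi : (phi <= 3)%nat) (Hdeg : steiner_deg_ok n phi T)
  c0 (Hc0 : inC c0 = true) : steiner_deg_ok n phi (split_tree s).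
Proof.
  intros x Hx. rewrite split_size in Hx. unfold deg. rewrite split_size.
  destruct (Nat.ltb_spec x (S N)); [|lia].
  destruct (fqst_parent _ _ _ _ HT k source_lt_N) as [Hk1 Hk2].
  destruct (Nat.eq_dec x N) as [->|HxN].
  - assert (2 <= cntN (S N) (fun j => Nat.eqb (par (split_tree s) j) N))%nat; [|lia].
    apply INR_le. rewrite cntN_sumR. cbn [sumR].
    rewrite split_in_sum_new, split_par_new, (Nat.eqb_sym (lift_sink _) N), N_neqb_lift by auto.
    assert (1 <= sumR N (fun i => if inC i then 1 else 0)).
    { destruct (HC c0 Hc0) as [Hc _].
      apply (Rle_trans _ ((fun i => if inC i then 1 else 0) c0)); [rewrite Hc0; lra|].
      apply (sumR_ge_term N (fun i => if inC i then 1 else 0)); auto.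
      intros. destruct (inC i); lra. }
    simpl. lra.
  - assert (Hd := Hdeg x ltac:(lia)). unfold deg in Hd.
    destruct (Nat.ltb_spec x N); [|lia].
    replace (fun j => Nat.eqb (par (split_tree s) j) x)
      with (fun j => Nat.eqb (par (split_tree s) j) (lift_sink x)) by (rewrite lift_sink_lt; auto).
    assert (cntN (S N) (fun j => Nat.eqb (par (split_tree s) j) (lift_sink x))
            = cntN N (fun j => Nat.eqb (par T j) x)); [|lia].
    apply INR_eq. rewrite !cntN_sumR. cbn [sumR].
    rewrite split_in_sum_old, split_par_new, lift_sink_eqb by lia.
    destruct (Nat.eqb_spec x k); [lia|]. destruct (Nat.eqb (par T k) x); lra.
Qed.

Lemma reaches_via_parent s x :
  (exists t, Nat.iter t (par (split_tree s)) (par (split_tree s) x) = S N) ->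
  exists t, Nat.iter t (par (split_tree s)) x = S N.
Proof. intros [t Ht]. exists (S t). rewrite Nat.iter_succ_r. auto. Qed.

Lemma parent_reaches s x : (exists t, Nat.iter t (par (split_tree s)) x = S N) -> x <> S N ->
  exists t, Nat.iter t (par (split_tree s)) (par (split_tree s) x) = S N.
Proof.
  intros [t Ht] E. destruct t; simpl in Ht; [congruence|].
  exists t. rewrite <- Nat.iter_succ_r. auto.
Qed.

Lemma new_point_reaches s : (exists t, Nat.iter t (par (split_tree s)) k = S N) ->
  exists t, Nat.iter t (par (split_tree s)) N = S N.
Proof.
  intros Hr. assert (H := parent_reaches s k Hr ltac:(lia)).
  rewrite split_par_old, Nat.eqb_refl, Bool.orb_true_r in H by apply source_lt_N. exact H.
Qed.

(* Every old node reaches the new sink: follow its old path to the sink,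
   making a detour through s at k or at a moved child. *)
Lemma split_reach_old s : forall t j, (j <= N)%nat -> Nat.iter t (par T) j = N ->
  exists t', Nat.iter t' (par (split_tree s)) (lift_sink j) = S N.
Proof.
  induction t as [|t IH]; intros j Hj Ht.
  - simpl in Ht. subst. exists O. unfold lift_sink. rewrite Nat.eqb_refl. auto.
  - destruct (Nat.eq_dec j N) as [->|HjN].
    + exists O. unfold lift_sink. rewrite Nat.eqb_refl. auto.
    + rewrite Nat.iter_succ_r in Ht. rewrite lift_sink_lt by lia.
      destruct (fqst_parent _ _ _ _ HT j ltac:(lia)) as [Hp1 Hp2].
      specialize (IH (par T j) Hp1 Ht). apply reaches_via_parent.
      rewrite split_par_old by lia.
      destruct (inC j) eqn:Ei; cbn [orb].
      * destruct (HC j Ei) as [_ Hpj]. rewrite Hpj, (lift_sink_lt k source_lt_N) in IH.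
        apply new_point_reaches. auto.
      * destruct (Nat.eqb_spec j k) as [->|]; auto.
        apply reaches_via_parent. rewrite split_par_new. auto.
Qed.

Lemma split_parent_ok s i : (i < S N)%nat ->
  (par (split_tree s) i <= S N)%nat /\ par (split_tree s) i <> i.
Proof.
  intros Hi. destruct (Nat.eq_dec i N) as [->|HiN].
  - rewrite split_par_new. destruct (fqst_parent _ _ _ _ HT k source_lt_N).
    unfold lift_sink. destruct (Nat.eqb_spec (par T k) N); lia.
  - rewrite split_par_old by lia. destruct (fqst_parent _ _ _ _ HT i ltac:(lia)).
    destruct (orb (inC i) (Nat.eqb i k)); [lia|].
    unfold lift_sink. destruct (Nat.eqb_spec (par T i) N); lia.
Qed.

Lemma split_reaches s i : (i < S N)%nat -> exists t, Nat.iter t (par (split_tree s)) i = S N.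
Proof.
  assert (Hold : forall j, (j < N)%nat -> exists t, Nat.iter t (par (split_tree s)) j = S N).
  { intros j Hj. destruct (fqst_reach _ _ _ _ HT j Hj) as [t Ht].
    rewrite <- (lift_sink_lt j Hj). apply (split_reach_old s t); auto. lia. }
  intros Hi. destruct (Nat.eq_dec i N) as [->|HiN].
  - apply new_point_reaches, Hold, source_lt_N.
  - apply Hold. lia.
Qed.

Lemma split_flow_pos s i : (i < S N)%nat -> 0 < flow (split_tree s) i.
Proof.
  intros Hi. destruct (Nat.eq_dec i N) as [->|HiN].
  - rewrite split_flow_new. apply (fqst_flow_pos _ _ _ _ HT), source_lt_N.
  - rewrite split_flow_old by lia. destruct (Nat.eqb_spec i k) as [->|].
    + assert (H := fqst_source_balance _ _ _ _ HT k Hk).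
      assert (H' := moved_flow_le_inflow). lra.
    + apply (fqst_flow_pos _ _ _ _ HT). lia.
Qed.

Lemma split_source_balance s i : (i < n)%nat ->
  flow (split_tree s) i - inflow n (split_tree s) i = 1.
Proof.
  intros Hi. rewrite split_flow_old by lia.
  rewrite <- (lift_sink_lt i), split_inflow_old, lift_sink_lt by lia.
  assert (H := fqst_source_balance _ _ _ _ HT i Hi).
  destruct (Nat.eqb_spec i k) as [->|]; lra.
Qed.

Lemma split_steiner_balance s i : (n <= i < S N)%nat ->
  flow (split_tree s) i = inflow n (split_tree s) i.
Proof.
  intros Hi. destruct (Nat.eq_dec i N) as [->|HiN].
  - rewrite split_flow_new, split_inflow_new. auto.
  - rewrite split_flow_old by lia.
    rewrite <- (lift_sink_lt i), split_inflow_old, lift_sink_lt by lia.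
    assert (H := fqst_steiner_balance _ _ _ _ HT i ltac:(lia)).
    destruct (Nat.eqb_spec i k); [lia | lra].
Qed.

Lemma split_sink_inflow s : inflow n (split_tree s) (S N) = INR n.
Proof.
  replace (S N) with (lift_sink N) by (unfold lift_sink; rewrite Nat.eqb_refl; auto).
  rewrite split_inflow_old by lia. destruct (Nat.eqb_spec N k); [lia|].
  assert (H := fqst_sink_inflow _ _ _ _ HT). lra.
Qed.

Lemma split_is_FQST s :
  (forall i, (i < nst T)%nat -> s <> spt T i) -> (forall i, (i < n)%nat -> s <> z i) ->
  s <> zBS -> is_FQST n z zBS (split_tree s).
Proof.
  intros Hs1 Hs2 Hs3. destruct HT as [_ [_ [H3 [H4 [H5 _]]]]].
  unfold is_FQST, sink. rewrite !split_size.
  repeat split.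
  - apply split_parent_ok; auto.
  - apply split_parent_ok; auto.
  - apply split_reaches.
  - intros i j Hi Hj Hij. simpl in Hi, Hj |- *.
    destruct (Nat.ltb_spec i (nst T)), (Nat.ltb_spec j (nst T)); try lia.
    + apply H3; auto.
    + intros E. apply (Hs1 i); auto.
    + intros E. apply (Hs1 j); auto.
  - intros i j Hi Hj. simpl. destruct (Nat.ltb_spec i (nst T)); auto.
  - intros i Hi. simpl. destruct (Nat.ltb_spec i (nst T)); auto.
  - apply split_flow_pos.
  - apply split_source_balance.
  - apply split_steiner_balance.
  - apply split_sink_inflow.
Qed.

Lemma split_cost s : cost n z zBS (split_tree s) = cost n z zBS T +
  (sumR N (fun i => if inC i then flow T i * (dist2 (pos i) s - dist2 (pos i) (pos k)) else 0)
   + (flow T k - moved_flow) * dist2 (pos k) s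
   + flow T k * dist2 s (pos (par T k))
   - flow T k * dist2 (pos k) (pos (par T k))).
Proof.
  unfold cost at 1. rewrite split_size. cbn [sumR].
  destruct (fqst_parent _ _ _ _ HT k source_lt_N) as [Hk1 Hk2].
  rewrite split_flow_new, split_pos_new, split_par_new, split_pos_lifted by auto.
  rewrite (sumR_ext N _ (fun i =>
     flow T i * dist2 (pos i) (pos (par T i))
     + (if inC i then flow T i * (dist2 (pos i) s - dist2 (pos i) (pos k)) else 0)
     + (if Nat.eqb i k then (flow T k - moved_flow) * dist2 (pos k) s
                            - flow T k * dist2 (pos k) (pos (par T k)) else 0))).
  - rewrite !sumR_plus, sumR_delta by apply source_lt_N. unfold cost. ring.
  - intros i Hi. rewrite split_flow_old, split_par_old, split_pos_old by auto.
    destruct (fqst_parent _ _ _ _ HT i Hi) as [Hp1 Hp2].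
    destruct (inC i) eqn:Ei; simpl.
    + destruct (HC i Ei) as [_ Hpi]. rewrite split_pos_new, Hpi.
      destruct (Nat.eqb_spec i k); [subst; congruence | ring].
    + destruct (Nat.eqb_spec i k) as [->|].
      * rewrite split_pos_new. ring.
      * rewrite split_pos_lifted by auto. ring.
Qed.

(* The first-order variation of the cost at s = K: the two components of
   G = sum_{i in C} f_i (K - z_i) + f_k (K - P). *)
Local Notation grad_x := (sumR N (fun i => if inC i then flow T i * (fst (pos k) - fst (pos i)) else 0)
  + flow T k * (fst (pos k) - fst (pos (par T k)))).
Local Notation grad_y := (sumR N (fun i => if inC i then flow T i * (snd (pos k) - snd (pos i)) else 0)
  + flow T k * (snd (pos k) - snd (pos (par T k)))).

(* Along the ray s = K - t G the cost is an exact quadratic in t, because the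
   total flow on the edges at s is 2 f_k. *)
Lemma split_cost_ray t :
  cost n z zBS (split_tree (fst (pos k) - t * grad_x, snd (pos k) - t * grad_y))
  = cost n z zBS T + 2 * t * (grad_x * grad_x + grad_y * grad_y) * (t * flow T k - 1).
Proof.
  rewrite split_cost.
  set (Sx := sumR N (fun i => if inC i then flow T i * (fst (pos k) - fst (pos i)) else 0)).
  set (Sy := sumR N (fun i => if inC i then flow T i * (snd (pos k) - snd (pos i)) else 0)).
  set (Gx := Sx + flow T k * (fst (pos k) - fst (pos (par T k)))).
  set (Gy := Sy + flow T k * (snd (pos k) - snd (pos (par T k)))).
  rewrite (sumR_ext N _ (fun i =>
       (-2 * t * Gx) * (if inC i then flow T i * (fst (pos k) - fst (pos i)) else 0)
     + (-2 * t * Gy) * (if inC i then flow T i * (snd (pos k) - snd (pos i)) else 0)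
     + (t * t * (Gx * Gx + Gy * Gy)) * (if inC i then flow T i else 0))).
  - rewrite !sumR_plus, !sumR_scal. fold Sx Sy moved_flow.
    unfold Gx, Gy, dist2. simpl. ring.
  - intros i Hi. destruct (inC i); [|ring]. unfold dist2. simpl. ring.
Qed.

Lemma split_descent : 0 < grad_x * grad_x + grad_y * grad_y ->
  exists s, is_FQST n z zBS (split_tree s) /\ cost n z zBS (split_tree s) < cost n z zBS T.
Proof.
  set (Gx := grad_x). set (Gy := grad_y). intros HG2.
  assert (HG : ~ (Gx = 0 /\ Gy = 0)) by (intros [Hx Hy]; rewrite Hx, Hy in HG2; lra).
  assert (HF : 0 < flow T k) by apply (fqst_flow_pos _ _ _ _ HT), source_lt_N.
  destruct (ray_avoids_finite (pos k) Gx Gy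
         (map z (seq 0 n) ++ map (spt T) (seq 0 (nst T)) ++ zBS :: nil)
         HG (/ flow T k) (Rinv_0_lt_compat _ HF)) as [t [Ht Havoid]].
  exists (fst (pos k) - t * Gx, snd (pos k) - t * Gy). split.
  - apply split_is_FQST; intros; apply Havoid; rewrite !in_app_iff.
    + right; left. apply in_map, in_seq. lia.
    + left. apply in_map, in_seq. lia.
    + right; right; left. auto.
  - unfold Gx, Gy. rewrite split_cost_ray. fold Gx Gy.
    assert (HtF : t * flow T k < 1).
    { rewrite <- (Rinv_l (flow T k)) by lra. apply Rmult_lt_compat_r; lra. }
    assert (0 < 2 * t * (Gx * Gx + Gy * Gy) * (1 - t * flow T k)).
    { apply Rmult_lt_0_compat; [apply Rmult_lt_0_compat|]; lra. }
    lra.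
Qed.

Lemma source_stationary phi (Hphi : (phi <= 3)%nat) (Hdeg : steiner_deg_ok n phi T)
  c0 (Hc0 : inC c0 = true)
  (Hmin : forall T', is_FQST n z zBS T' -> steiner_deg_ok n phi T' ->
          cost n z zBS T <= cost n z zBS T') :
  grad_x = 0 /\ grad_y = 0.
Proof.
  destruct (Rle_lt_dec (grad_x * grad_x + grad_y * grad_y) 0) as [Hle|Hlt].
  - apply Rplus_sqr_eq_0, Rle_antisym; [exact Hle|].
    apply Rplus_le_le_0_compat; apply Rle_0_sqr.
  - destruct (split_descent Hlt) as [s [Hs Hcost]].
    assert (H := Hmin _ Hs (split_deg_ok phi s Hphi Hdeg c0 Hc0)). lra.
Qed.

End Split.

Section MinimalSource.
Variables (n : nat) (z : nat -> point) (zBS : point) (phi : nat) (T : FQST).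
Hypothesis Hz : forall i j, (i < n)%nat -> (j < n)%nat -> i <> j -> z i <> z j.
Hypothesis HBS : forall i, (i < n)%nat -> z i <> zBS.
Hypothesis HT : is_FQST n z zBS T.
Hypothesis Hphi : (phi <= 3)%nat.
Hypothesis Hdeg : steiner_deg_ok n phi T.
Hypothesis Hmin : forall T', is_FQST n z zBS T' -> steiner_deg_ok n phi T' ->
  cost n z zBS T <= cost n z zBS T'.
Variable k : nat.
Hypothesis Hk : (k < n)%nat.

Local Notation N := (n + nst T)%nat.
Local Notation pos := (node_pos n z zBS T).

(* Stationarity for C = {b}: the child b balances the parent of k. *)
Lemma child_balance b : (b < N)%nat -> par T b = k ->
  flow T b * (fst (pos k) - fst (pos b)) + flow T k * (fst (pos k) - fst (pos (par T k))) = 0 /\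
  flow T b * (snd (pos k) - snd (pos b)) + flow T k * (snd (pos k) - snd (pos (par T k))) = 0.
Proof.
  intros Hb Hpb.
  assert (HC : forall i, Nat.eqb i b = true -> (i < N)%nat /\ par T i = k)
    by (intros i Hi; apply Nat.eqb_eq in Hi; subst; auto).
  assert (H := source_stationary n z zBS T HT k Hk _ HC phi Hphi Hdeg b (Nat.eqb_refl b) Hmin).
  rewrite !(sumR_delta _ b (fun i => flow T i * (_ - _ (pos i)))) in H by auto.
  exact H.
Qed.

(* Stationarity for C = {a, b} together with [child_balance] for a shows that
   b would lie at the position of k. *)
Lemma at_most_one_child a b : (a < N)%nat -> (b < N)%nat -> par T a = k -> par T b = k -> a = b.
Proof.
  intros Ha Hb Hpa Hpb. destruct (Nat.eq_dec a b) as [|Hab]; auto. exfalso.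
  assert (HC : forall i, orb (Nat.eqb i a) (Nat.eqb i b) = true -> (i < N)%nat /\ par T i = k)
    by (intros i Hi; apply Bool.orb_true_iff in Hi;
        destruct Hi as [Hi|Hi]; apply Nat.eqb_eq in Hi; subst; auto).
  assert (Hpair := source_stationary n z zBS T HT k Hk _ HC phi Hphi Hdeg a
                     (Bool.orb_true_intro _ _ (or_introl (Nat.eqb_refl a))) Hmin).
  rewrite !(sumR_delta2 _ a b (fun i => flow T i * (_ - _ (pos i)))) in Hpair by auto.
  destruct Hpair as [Px Py]. destruct (child_balance a Ha Hpa) as [Ax Ay].
  assert (Hfb : 0 < flow T b) by apply (fqst_flow_pos _ _ _ _ HT), Hb.
  assert (Hbx : flow T b * (fst (pos k) - fst (pos b)) = 0) by lra.
  assert (Hby : flow T b * (snd (pos k) - snd (pos b)) = 0) by lra.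
  apply (node_pos_not_source n z zBS T HT k b Hz HBS Hk ltac:(lia)).
  { intros ->. apply (fqst_parent _ _ _ _ HT k Hb). auto. }
  rewrite <- (node_pos_source n z zBS T k Hk).
  destruct (Rmult_integral _ _ Hbx), (Rmult_integral _ _ Hby); try lra.
  rewrite (surjective_pairing (pos b)), (surjective_pairing (pos k)). f_equal; lra.
Qed.

Lemma source_children_le1 : (cntN N (fun j => Nat.eqb (par T j) k) <= 1)%nat.
Proof.
  destruct (le_lt_dec (cntN N (fun j => Nat.eqb (par T j) k)) 1) as [|Hc]; auto.
  destruct (cntN_two_witnesses _ _ Hc) as [a [b [Ha [Hb [Hab [Pa Pb]]]]]].
  apply Nat.eqb_eq in Pa, Pb. destruct Hab. apply at_most_one_child; auto.
Qed.

Lemma source_child_parent_collinear b : (b < N)%nat -> par T b = k ->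
  pt_collinear (pos k) (pos (par T k)) (pos b).
Proof.
  intros Hb Hpb. destruct (child_balance b Hb Hpb) as [Ex Ey].
  apply (balance_collinear _ _ _ (flow T b) (flow T k)); auto.
  apply (fqst_flow_pos _ _ _ _ HT), Hb.
Qed.

End MinimalSource.

Theorem mainTheorem10 (n : nat) (z : nat -> point) (zBS : point)
  (Hn : (1 <= n)%nat)
  (Hz : forall i j, (i < n)%nat -> (j < n)%nat -> i <> j -> z i <> z j)
  (HBS : forall i, (i < n)%nat -> z i <> zBS)
  (T : FQST) (HT : is_MFQST n z zBS 3 T) :
  forall k, (k < n)%nat ->
    (deg n T k <= 2)%nat /\
    (deg n T k = 2%nat ->
       forall a b, a <> b -> adjacent n T k a -> adjacent n T k b ->
       pt_collinear (node_pos n z zBS T k) (node_pos n z zBS T a) (node_pos n z zBS T b)).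
Proof.
  intros k Hk. destruct HT as [HF [Hdeg Hmin]].
  assert (Hphi : (3 <= 3)%nat) by lia.
  split.
  - (* a source has one out-edge and at most one child *)
    unfold deg. destruct (Nat.ltb_spec k (n + nst T)); [|lia].
    assert (Hle := source_children_le1 n z zBS 3 T Hz HBS HF Hphi Hdeg Hmin k Hk). lia.
  - (* the two neighbours are the parent and the unique child *)
    intros _ a b Hab [[_ ->]|[Ha Pa]] [[_ ->]|[Hb Pb]].
    + congruence.
    + apply (source_child_parent_collinear n z zBS 3 T HF Hphi Hdeg Hmin k Hk); auto.
    + apply pt_collinear_swap.
      apply (source_child_parent_collinear n z zBS 3 T HF Hphi Hdeg Hmin k Hk); auto.
    + destruct Hab. apply (at_most_one_child n z zBS 3 T Hz HBS HF Hphi Hdeg Hmin k Hk); auto.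
Qed.
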